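(* Let $X=\{x\in\mathbb{R}^n: Cx\le d\}$ be a polyhedral set ($C\in\mathbb{R}^{p\times n}$, $d\in\mathbb{R}^p$), let $g:\mathbb{R}^m\to\mathbb{R}$ be $\sigma_g$-strongly convex with $L_g$-Lipschitz continuous gradient, let $A\in\mathbb{R}^{m\times n}$ be nonzero, and set $f(x)=g(Ax)$. Assume the optimal set $X^*$ of $\min_{x\in X}f(x)$ is nonempty. Then there is a unique $t^*\in\mathbb{R}^m$ with $Ax^*=t^*$ for all $x^*\in X^*$, so that $X^*=\{x: Ax=t^*,\ Cx\le d\}$; let $\theta>0$ be a Hoffman constant for this polyhedron, i.e. $$\|x-[x]_{X^*}\|\le\theta\left\|\begin{pmatrix}Ax-t^*\\ [Cx-d]_+\end{pmatrix}\right\|\qquad\forall x\in\mathbb{R}^n .$$ Then $\nabla f$ is Lipschitz continuous with constant $L_f=L_g\|A\|^2$, and $f$ is quasi-strongly convex on $X$ with constant $\kappa_f=\sigma_g/\theta^2$, i.e. $$f^*\ge f(x)+\langle\nabla f(x),\bar x-x\rangle+\frac{\sigma_g}{2\theta^2}\|x-\bar x\|^2\qquad\forall x\in X,\ \bar x=[x]_{X^*}.$$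
   Context: $\|\cdot\|$ denotes the Euclidean norm (spectral norm for matrices), $[u]_S$ the Euclidean projection onto a closed convex set $S$, and $[v]_+$ the componentwise positive part. $g$ is $\sigma_g$-strongly convex means $g(z)\ge g(w)+\langle\nabla g(w),z-w\rangle+\frac{\sigma_g}{2}\|z-w\|^2$ for all $z,w$, with $\sigma_g>0$. $f^*=\min_{x\in X}f(x)$. *)

From Stdlib Require Import Reals.
From mathcomp Require Import all_boot.
Set Implicit Arguments.
Unset Strict Implicit.
Unset Printing Implicit Defensive.
Open Scope R_scope.

Definition vec (n : nat) := 'I_n -> R.
Definition mat (p n : nat) := 'I_p -> 'I_n -> R.

Definition dot (n : nat) (x y : vec n) : R := \big[Rplus/0]_(i < n) (x i * y i).
Definition vnorm (n : nat) (x : vec n) : R := sqrt (dot x x).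

Definition vadd (n : nat) (x y : vec n) : vec n := fun i => x i + y i.
Definition vsub (n : nat) (x y : vec n) : vec n := fun i => x i - y i.

Definition mulmv (p n : nat) (A : mat p n) (x : vec n) : vec p :=
  fun i => \big[Rplus/0]_(j < n) (A i j * x j).

Definition vle (p : nat) (u v : vec p) : Prop := forall i, u i <= v i.
Definition vpos (p : nat) (u : vec p) : vec p := fun i => Rmax (u i) 0.

Definition stack_norm (m p : nat) (u : vec m) (v : vec p) : R :=
  sqrt (dot u u + dot v v).

Definition is_spectral_norm (m n : nat) (A : mat m n) (nA : R) : Prop :=
  is_lub (fun r => exists x : vec n, vnorm x <= 1 /\ r = vnorm (mulmv A x)) nA.

Definition is_gradient (n : nat) (f : vec n -> R) (gf : vec n -> vec n) : Prop :=
  forall x eps, 0 < eps -> exists delta, 0 < delta /\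
    forall h : vec n, vnorm h < delta ->
      Rabs (f (vadd x h) - f x - dot (gf x) h) <= eps * vnorm h.

Definition strongly_convex (n : nat) (g : vec n -> R) (gg : vec n -> vec n)
  (sigma : R) : Prop :=
  forall z w, g z >= g w + dot (gg w) (vsub z w) + sigma / 2 * (vnorm (vsub z w))^2.

Definition lipschitz (n : nat) (F : vec n -> vec n) (L : R) : Prop :=
  forall z w, vnorm (vsub (F z) (F w)) <= L * vnorm (vsub z w).

Definition polyhedron (p n : nat) (C : mat p n) (d : vec p) (x : vec n) : Prop :=
  vle (mulmv C x) d.

Definition argmin_set (n : nat) (f : vec n -> R) (X : vec n -> Prop) (x : vec n) : Prop :=
  X x /\ forall y, X y -> f x <= f y.

Definition is_min_value (n : nat) (f : vec n -> R) (X : vec n -> Prop) (fs : R) : Prop :=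
  (exists x, X x /\ f x = fs) /\ forall x, X x -> fs <= f x.

Definition is_proj (n : nat) (S : vec n -> Prop) (x p : vec n) : Prop :=
  S p /\ forall y, S y -> vnorm (vsub x p) <= vnorm (vsub x y).

(* Strong convexity of g makes the image A x* of every minimiser the same point t*: two minimisers
   with different images would have a feasible midpoint with a strictly smaller value. The optimal set
   is therefore the polyhedron {A x = t*, C x <= d}, and for feasible x the Hoffman bound reads
   ||x - x̄|| <= θ ||A x̄ - A x||. Strong convexity of g between A x and A x̄ = t* then gives the
   quadratic growth term σ_g ||A x̄ - A x||^2 / 2 >= σ_g ||x - x̄||^2 / (2 θ^2). The gradient of f is
   A^T ∇g(A ·), whose Lipschitz constant is L_g ||A||^2 since ||A^T|| = ||A||. *)

From Stdlib Require Import Reals Lra FunctionalExtensionality.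
From HB Require Import structures.
From mathcomp Require Import all_boot.
Set Implicit Arguments.
Unset Strict Implicit.
Open Scope R_scope.

HB.instance Definition _ := Monoid.isComLaw.Build R 0 Rplus
  (fun x y z => esym (Rplus_assoc x y z)) Rplus_comm Rplus_0_l.

Lemma big_Rplus_scal n c (F : 'I_n -> R) :
  \big[Rplus/0]_(i < n) (c * F i) = c * \big[Rplus/0]_(i < n) F i.
Proof. by elim/big_rec2: _ => [|i y1 y2 _ ->]; ring. Qed.

Lemma dot_self_ge0 n (x : vec n) : 0 <= dot x x.
Proof. by apply: big_ind => [|a b|i _]; [lra | lra | nra]. Qed.

Lemma dot_self_eq0 n (x : vec n) : dot x x = 0 -> forall i, x i = 0.
Proof.
move=> Hx i; move: Hx; rewrite /dot (bigD1 i) //=; set rest := (X in _ + X = _).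
have Hrest : 0 <= rest by apply: big_ind => [|a b|j _]; [lra | lra | nra].
move=> Hsum; have Hxi : x i * x i = 0 by clearbody rest; nra.
by case: (Rmult_integral _ _ Hxi).
Qed.

Lemma dotC n (x y : vec n) : dot x y = dot y x.
Proof. by apply: eq_bigr => i _ /=; ring. Qed.

Lemma dotZl n (x z : vec n) a : dot (fun i => a * x i) z = a * dot x z.
Proof. by rewrite /dot -big_Rplus_scal; apply: eq_bigr => i _ /=; ring. Qed.

Lemma vsubE n (x y : vec n) : vsub x y = fun i => 1 * x i + (-1) * y i.
Proof. by apply: functional_extensionality => i; rewrite /vsub; ring. Qed.

Definition tr_mat (p n : nat) (A : mat p n) : mat n p := fun j i => A i j.

Lemma mulmv_lin p n (A : mat p n) (x y : vec n) a b :
  mulmv A (fun j => a * x j + b * y j) = fun i => a * mulmv A x i + b * mulmv A y i.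
Proof.
apply: functional_extensionality => i.
by rewrite /mulmv -!big_Rplus_scal -big_split; apply: eq_bigr => j _ /=; ring.
Qed.

Lemma mulmvB p n (A : mat p n) (x y : vec n) :
  mulmv A (vsub x y) = vsub (mulmv A x) (mulmv A y).
Proof. by rewrite !vsubE mulmv_lin. Qed.

Lemma mulmvD p n (A : mat p n) (x y : vec n) :
  mulmv A (vadd x y) = vadd (mulmv A x) (mulmv A y).
Proof.
have E k (z w : vec k) : vadd z w = fun i => 1 * z i + 1 * w i.
  by apply: functional_extensionality => i; rewrite /vadd; ring.
by rewrite !E mulmv_lin.
Qed.

Lemma mulmvZ p n (A : mat p n) (x : vec n) a :
  mulmv A (fun j => a * x j) = fun i => a * mulmv A x i.
Proof.
apply: functional_extensionality => i.
by rewrite /mulmv -big_Rplus_scal; apply: eq_bigr => j _ /=; ring.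
Qed.

Lemma mulmv0 p n (A : mat p n) : mulmv A (fun _ => 0) = fun _ => 0.
Proof. by apply: functional_extensionality => i; rewrite /mulmv big1 // => j _; ring. Qed.

Lemma dot_mulmv_tr p n (A : mat p n) (x : vec n) (u : vec p) :
  dot (mulmv A x) u = dot x (mulmv (tr_mat A) u).
Proof.
rewrite /dot /mulmv /tr_mat.
transitivity (\big[Rplus/0]_(i < p) \big[Rplus/0]_(j < n) (A i j * x j * u i)).
  by apply: eq_bigr => i _; rewrite Rmult_comm -big_Rplus_scal; apply: eq_bigr => j _ /=; ring.
by rewrite exchange_big; apply: eq_bigr => j _; rewrite -big_Rplus_scal; apply: eq_bigr => i _ /=; ring.
Qed.

Lemma vnorm_ge0 n (x : vec n) : 0 <= vnorm x.
Proof. exact: sqrt_pos. Qed.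

Lemma vnorm_sq n (x : vec n) : vnorm x ^ 2 = dot x x.
Proof. by rewrite /vnorm /= Rmult_1_r sqrt_sqrt //; apply: dot_self_ge0. Qed.

Lemma vnorm_eq0 n (x : vec n) : vnorm x = 0 -> x = fun _ => 0.
Proof.
move=> Hx; apply: functional_extensionality; apply: dot_self_eq0.
by rewrite -vnorm_sq Hx; ring.
Qed.

Lemma vnorm0 n : vnorm (fun _ : 'I_n => 0) = 0.
Proof. by rewrite /vnorm /dot big1 ?sqrt_0 // => i _; ring. Qed.

Lemma vnormZ n (x : vec n) a : vnorm (fun i => a * x i) = Rabs a * vnorm x.
Proof.
rewrite /vnorm dotZl (dotC x) dotZl -Rmult_assoc sqrt_mult_alt; last by nra.
by rewrite -sqrt_Rsqr_abs.
Qed.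

Lemma vnormN n (x : vec n) : vnorm (fun i => -1 * x i) = vnorm x.
Proof. by rewrite vnormZ Rabs_Ropp Rabs_R1; ring. Qed.

Lemma vnorm_subC n (x y : vec n) : vnorm (vsub x y) = vnorm (vsub y x).
Proof.
have -> : vsub y x = fun i => -1 * vsub x y i.
  by apply: functional_extensionality => i; rewrite /vsub; ring.
by rewrite vnormN.
Qed.

(* With a = ||u|| and b = ||v||: 0 <= ||b u - a v||^2 = 2 a b (a b - <u, v>). *)
Lemma dot_le_vnorm n (u v : vec n) : dot u v <= vnorm u * vnorm v.
Proof.
set a := vnorm u; set b := vnorm v.
have Ha : 0 <= a := vnorm_ge0 u; have Hb : 0 <= b := vnorm_ge0 v.
have Hw : 0 <= 2 * (a * b) * (a * b - dot u v).
  have := dot_self_ge0 (fun i => b * u i - a * v i).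
  have -> : dot (fun i => b * u i - a * v i) (fun i => b * u i - a * v i)
      = (b * b) * dot u u + (-2 * a * b) * dot u v + (a * a) * dot v v.
    by rewrite /dot -!big_Rplus_scal -!big_split; apply: eq_bigr => i _ /=; ring.
  by rewrite -!vnorm_sq -/a -/b; nra.
have [Hab | Hab] := Rle_lt_or_eq_dec 0 (a * b) ltac:(nra); first nra.
have [Ha0 | Hb0] : a = 0 \/ b = 0 by apply: Rmult_integral.
- by rewrite /a in Ha0; rewrite (vnorm_eq0 Ha0) /dot big1 => [|i _]; lra.
- by rewrite /b in Hb0; rewrite (vnorm_eq0 Hb0) /dot big1 => [|i _]; lra.
Qed.

Section SpectralNorm.

Variables (m n : nat) (A : mat m n) (nA : R).
Hypothesis HA : is_spectral_norm A nA.

Lemma spectral_norm_ge0 : 0 <= nA.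
Proof.
by case: HA => Hub _; apply: Hub; exists (fun _ => 0); rewrite mulmv0 !vnorm0; split; lra.
Qed.

Lemma spectral_norm_bound x : vnorm (mulmv A x) <= nA * vnorm x.
Proof.
have [Hx | Hx] := Rle_lt_or_eq_dec 0 (vnorm x) (vnorm_ge0 x); last first.
  by rewrite -Hx (vnorm_eq0 (esym Hx)) mulmv0 vnorm0; lra.
have Hinv : 0 < / vnorm x by apply: Rinv_0_lt_compat.
have Hunit : vnorm (mulmv A (fun i => / vnorm x * x i)) <= nA.
  case: HA => Hub _; apply: Hub; exists (fun i => / vnorm x * x i); split => //.
  by rewrite vnormZ Rabs_right ?Rinv_l; lra.
rewrite mulmvZ vnormZ Rabs_right in Hunit; last lra.
apply: (Rmult_le_reg_l (/ vnorm x)) => //.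
by rewrite -Rmult_assoc (Rmult_comm _ nA) Rmult_assoc Rinv_l; lra.
Qed.

(* ||A^T u||^2 = <A (A^T u), u> <= ||A|| ||A^T u|| ||u||. *)
Lemma spectral_norm_bound_tr u : vnorm (mulmv (tr_mat A) u) <= nA * vnorm u.
Proof.
set w := mulmv (tr_mat A) u.
have Hsq : vnorm w ^ 2 <= nA * vnorm w * vnorm u.
  rewrite vnorm_sq {2}/w -dot_mulmv_tr.
  apply: Rle_trans (dot_le_vnorm _ _) _; apply: Rmult_le_compat_r; first exact: vnorm_ge0.
  exact: spectral_norm_bound.
have Hw := vnorm_ge0 w; have Hu := vnorm_ge0 u; have HnA := spectral_norm_ge0.
rewrite /= Rmult_1_r in Hsq; apply: Rnot_lt_le => Hlt.
have Hw0 : 0 < vnorm w by nra.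
nra.
Qed.

End SpectralNorm.

Lemma lipschitz_ge0 m (F : vec m -> vec m) L (i : 'I_m) : lipschitz F L -> 0 <= L.
Proof.
move=> HF; set e := fun j : 'I_m => if j == i then 1 else 0.
have He : 0 < vnorm (vsub e (fun _ => 0)).
  have [|H0] := Rle_lt_or_eq_dec 0 _ (vnorm_ge0 (vsub e (fun _ => 0))) => //.
  by have := f_equal (fun v => v i) (vnorm_eq0 (esym H0)); rewrite /= /vsub /e eqxx; lra.
have := HF e (fun _ => 0); have := vnorm_ge0 (vsub (F e) (F (fun _ => 0))); nra.
Qed.

Definition vmid n (x y : vec n) : vec n := fun i => / 2 * x i + / 2 * y i.

Lemma strongly_convex_midpoint m (g : vec m -> R) gg sigma (a b : vec m) :
  strongly_convex g gg sigma ->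
  g a + g b >= 2 * g (vmid a b) + sigma / 4 * vnorm (vsub a b) ^ 2.
Proof.
move=> Hsc; set w := fun i => / 2 * vsub a b i.
have Ea : vsub a (vmid a b) = w.
  by apply: functional_extensionality => i; rewrite /w /vmid /vsub; field.
have Eb : vsub b (vmid a b) = fun i => -1 * w i.
  by apply: functional_extensionality => i; rewrite /w /vmid /vsub; field.
have Hw : vnorm w = / 2 * vnorm (vsub a b) by rewrite vnormZ Rabs_right; lra.
have := Hsc a (vmid a b); have := Hsc b (vmid a b).
rewrite Ea Eb vnormN (dotC _ (fun i => -1 * w i)) dotZl dotC Hw /=; lra.
Qed.

Lemma polyhedron_vmid p n (C : mat p n) d x y :
  polyhedron C d x -> polyhedron C d y -> polyhedron C d (vmid x y).
Proof. by move=> Hx Hy i; rewrite /vmid mulmv_lin; have := Hx i; have := Hy i; lra. Qed.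

Section ArgminCompLinear.

Variables (n m : nat) (A : mat m n) (g : vec m -> R) (X : vec n -> Prop).
Let f := fun x : vec n => g (mulmv A x).

Lemma argmin_comp_linear_image_unique gg sigma :
  0 < sigma -> strongly_convex g gg sigma ->
  (forall x y, X x -> X y -> X (vmid x y)) ->
  forall x1 x2, argmin_set f X x1 -> argmin_set f X x2 -> mulmv A x1 = mulmv A x2.
Proof.
move=> Hsig Hsc Hmid x1 x2 [HX1 Hmin1] [HX2 Hmin2].
have Hle_mid := Hmin1 _ (Hmid _ _ HX1 HX2).
have H12 := Hmin1 _ HX2; have H21 := Hmin2 _ HX1.
rewrite /f /vmid mulmv_lin -/(vmid _ _) in Hle_mid H12 H21.
have Hgap := strongly_convex_midpoint (mulmv A x1) (mulmv A x2) Hsc.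
have Hd : vnorm (vsub (mulmv A x1) (mulmv A x2)) ^ 2 = 0.
  by have := pow2_ge_0 (vnorm (vsub (mulmv A x1) (mulmv A x2))); nra.
rewrite vnorm_sq in Hd; apply: functional_extensionality => i.
by have := dot_self_eq0 Hd i; rewrite /vsub; lra.
Qed.

Lemma argmin_comp_linear_fiber xs :
  argmin_set f X xs ->
  (forall x, argmin_set f X x -> mulmv A x = mulmv A xs) ->
  forall x, argmin_set f X x <-> mulmv A x = mulmv A xs /\ X x.
Proof.
move=> [HXs Hmin] Himg x; split => [Hx | [HAx HX]].
  by split; [exact: Himg | case: Hx].
by split=> // y Hy; rewrite /f HAx; exact: Hmin.
Qed.

End ArgminCompLinear.

Section CompLinear.

Variables (n m : nat) (A : mat m n) (g : vec m -> R) (gg : vec m -> vec m).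
Let grad_f := fun x : vec n => mulmv (tr_mat A) (gg (mulmv A x)).

Lemma is_gradient_comp_linear nA :
  is_gradient g gg -> is_spectral_norm A nA ->
  is_gradient (fun x => g (mulmv A x)) grad_f.
Proof.
move=> Hg HA x eps Heps.
have HnA := spectral_norm_ge0 HA.
have Heps' : 0 < eps / (nA + 1) by apply: Rdiv_lt_0_compat; lra.
have [dl [Hdl Hd]] := Hg (mulmv A x) _ Heps'.
exists (dl / (nA + 1)); split=> [|h Hh]; first by apply: Rdiv_lt_0_compat; lra.
have HAh := spectral_norm_bound HA h.
have Hh0 := vnorm_ge0 h.
have Hh' : vnorm h * (nA + 1) < dl.
  by move: Hh; rewrite /Rdiv => Hh; apply: (Rmult_lt_reg_r (/ (nA + 1)));
     [apply: Rinv_0_lt_compat; lra | rewrite Rmult_assoc Rinv_r; lra].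
have := Hd (mulmv A h) ltac:(nra).
rewrite mulmvD => Herr; rewrite /grad_f dotC -dot_mulmv_tr dotC.
apply: Rle_trans Herr _.
have -> : eps / (nA + 1) * vnorm (mulmv A h) = eps * (vnorm (mulmv A h) / (nA + 1)) by field; lra.
apply: Rmult_le_compat_l; first lra.
apply: (Rmult_le_reg_r (nA + 1)); first lra.
by rewrite /Rdiv Rmult_assoc Rinv_l; nra.
Qed.

Lemma lipschitz_grad_comp_linear L nA :
  lipschitz gg L -> 0 <= L -> is_spectral_norm A nA -> lipschitz grad_f (L * nA ^ 2).
Proof.
move=> Hlip HL HA x z; rewrite /grad_f -mulmvB.
have HnA := spectral_norm_ge0 HA.
apply: Rle_trans (spectral_norm_bound_tr HA _) _.
have Hg := Hlip (mulmv A x) (mulmv A z); rewrite -mulmvB in Hg.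
have HAxz := spectral_norm_bound HA (vsub x z).
have HLM : L * vnorm (mulmv A (vsub x z)) <= L * (nA * vnorm (vsub x z)).
  exact: Rmult_le_compat_l.
have := Rmult_le_compat_l nA _ _ HnA (Rle_trans _ _ _ Hg HLM).
by rewrite /=; lra.
Qed.

Lemma strongly_convex_comp_linear_error_bound sigma theta (x xb : vec n) :
  0 < sigma -> 0 < theta -> strongly_convex g gg sigma ->
  vnorm (vsub x xb) <= theta * vnorm (vsub (mulmv A xb) (mulmv A x)) ->
  g (mulmv A xb) >= g (mulmv A x) + dot (grad_f x) (vsub xb x)
                   + sigma / (2 * theta ^ 2) * vnorm (vsub x xb) ^ 2.
Proof.
move=> Hsig Htheta Hsc Hbound.
have Hs := Hsc (mulmv A xb) (mulmv A x).
rewrite /grad_f dotC -dot_mulmv_tr dotC mulmvB.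
set N := vnorm (vsub x xb) in Hbound *.
set M := vnorm (vsub (mulmv A xb) (mulmv A x)) in Hbound Hs *.
have HN : 0 <= N := vnorm_ge0 _.
have Ht2 : 0 < theta ^ 2 by apply: pow_lt.
have HN2 : N ^ 2 <= theta ^ 2 * M ^ 2 by rewrite -Rpow_mult_distr; apply: pow_incr; lra.
have Hgrowth : sigma / (2 * theta ^ 2) * N ^ 2 <= sigma / 2 * M ^ 2.
  have -> : sigma / 2 * M ^ 2 = sigma / (2 * theta ^ 2) * (theta ^ 2 * M ^ 2) by field; lra.
  by apply: Rmult_le_compat_l => //; apply: Rlt_le; apply: Rdiv_lt_0_compat; lra.
lra.
Qed.

End CompLinear.

Lemma stack_norm_feasible p n m (C : mat p n) d (x : vec n) (u : vec m) :
  polyhedron C d x -> stack_norm u (vpos (vsub (mulmv C x) d)) = vnorm u.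
Proof.
move=> Hx; rewrite /stack_norm /vnorm (_ : dot _ (vpos _) = 0) ?Rplus_0_r //.
rewrite /dot big1 // => i _; rewrite /vpos /vsub Rmax_right; first ring.
by have := Hx i; lra.
Qed.

Unset Implicit Arguments.

Theorem theorem8 (n m p : nat) (C : mat p n) (d : vec p) (A : mat m n)
  (g : vec m -> R) (gg : vec m -> vec m) (sigma_g L_g : R) (nA : R) :
  is_gradient g gg ->
  0 < sigma_g ->
  strongly_convex g gg sigma_g ->
  lipschitz gg L_g ->
  (exists i j, A i j <> 0) ->
  is_spectral_norm A nA ->
  let f := fun x : vec n => g (mulmv A x) in
  let X := polyhedron C d in
  let Xstar := argmin_set f X in
  (exists xs, Xstar xs) ->
  (exists! t : vec m,
      (forall xs, Xstar xs -> mulmv A xs = t) /\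
      (forall x, Xstar x <-> (mulmv A x = t /\ vle (mulmv C x) d))) /\
  (exists gf : vec n -> vec n,
      is_gradient f gf /\
      lipschitz gf (L_g * nA ^ 2) /\
      forall (t : vec m) (theta : R),
        (forall xs, Xstar xs -> mulmv A xs = t) ->
        0 < theta ->
        (forall x xb, is_proj Xstar x xb ->
           vnorm (vsub x xb) <=
             theta * stack_norm (vsub (mulmv A x) t) (vpos (vsub (mulmv C x) d))) ->
        forall fs, is_min_value f X fs ->
        forall x xb, X x -> is_proj Xstar x xb ->
          fs >= f x + dot (gf x) (vsub xb x)
                + sigma_g / (2 * theta ^ 2) * (vnorm (vsub x xb)) ^ 2).
Proof.
move=> Hgrad Hsig Hsc Hlip [i0 _] HA f X Xstar [xs Hxs].
have Himg := argmin_comp_linear_image_unique Hsig Hsc (@polyhedron_vmid _ _ C d).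
split.
  exists (mulmv A xs); split=> [|t [Ht _]]; last exact: Ht.
  split=> [x Hx|]; first exact: Himg.
  by apply: argmin_comp_linear_fiber => // x Hx; exact: Himg.
have HLg : 0 <= L_g := lipschitz_ge0 i0 Hlip.
exists (fun x => mulmv (tr_mat A) (gg (mulmv A x))); split; last split.
- exact: is_gradient_comp_linear Hgrad HA.
- exact: lipschitz_grad_comp_linear Hlip HLg HA.
move=> t theta Ht Htheta Hhof fs [[y [Hy Hfy]] Hfs] x xb Hx Hp.
have Hxb : Xstar xb by case: Hp.
have -> : fs = f xb by have := Hfs _ (proj1 Hxb); have := proj2 Hxb _ Hy; lra.
apply: strongly_convex_comp_linear_error_bound => //.
by rewrite (Ht _ Hxb) (vnorm_subC t) -(stack_norm_feasible (vsub (mulmv A x) t) Hx); apply: Hhof.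
Qed.
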